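(* Suppose $R$ is not a local multiplicative hyperring. Then a hyperideal $I$ of $R$ is 1-absorbing primary if and only if $I$ is a primary hyperideal of $R$.
   Context: Throughout, $R$ is a commutative multiplicative hyperring ($(R,+)$ abelian group, $\circ$ a commutative associative hyperoperation into nonempty subsets, $a\circ(b+c)\subseteq a\circ b+a\circ c$, $a\circ(-b)=(-a)\circ b=-(a\circ b)$; $A\circ B=\bigcup a\circ b$), with identity $1$ ($a\in a\circ 1$); $x$ is a unit if $1\in x\circ y$ for some $y$. All hyperideals are $\mathbf{C}$-hyperideals (for any finite product $A=r_1\circ\cdots\circ r_n$, $A\cap I\neq\emptyset\Rightarrow A\subseteq I$). $\sqrt I=\{r:r^n\subseteq I\text{ for some }n\}$. Primary hyperideal: nonzero proper $Q$ with $x\circ y\subseteq Q\Rightarrow x\in Q$ or $y\in\sqrt Q$. 1-absorbing primary hyperideal: proper $I$ such that for all nonunit $x,y,z$, $x\circ y\circ z\subseteq I$ implies $x\circ y\subseteq I$ or $z\in\sqrt I$. $R$ is local if it has a unique maximal hyperideal. *)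

From mathcomp Require Import all_boot all_algebra.
Set Implicit Arguments. Unset Strict Implicit. Unset Printing Implicit Defensive.
Import GRing.Theory.
Local Open Scope ring_scope.

Definition hsubset (T : Type) (A B : T -> Prop) := forall x, A x -> B x.

Definition hset_mul (T : Type) (m : T -> T -> T -> Prop) (A B : T -> Prop) : T -> Prop :=
  fun x => exists a b, A a /\ B b /\ m a b x.

Definition sing (T : Type) (a : T) : T -> Prop := fun x => x = a.

(* Commutative multiplicative hyperring with identity, over the abelian
   group (R,+). [hmul a b] is the (nonempty) set a ∘ b. *)
Record hyperring (R : zmodType) := HyperRing {
  hmul : R -> R -> R -> Prop;
  hone : R;
  hmul_nonempty : forall a b, exists x, hmul a b x;
  hmul_comm : forall a b x, hmul a b x <-> hmul b a x;
  hmul_assoc : forall a b c x,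
    hset_mul hmul (hmul a b) (sing c) x <-> hset_mul hmul (sing a) (hmul b c) x;
  hmul_distr : forall a b c x, hmul a (b + c) x ->
    exists u v, hmul a b u /\ hmul a c v /\ x = u + v;
  hmul_oppr : forall a b x, hmul a (- b) x <-> hmul a b (- x);
  hmul_oppl : forall a b x, hmul (- a) b x <-> hmul a b (- x);
  hmul_one : forall a, hmul a hone a
}.

Section Defs.
Variables (R : zmodType) (H : hyperring R).

Local Notation "a ** b" := (hmul H a b) (at level 40).

Fixpoint hprodl (A : R -> Prop) (s : seq R) : R -> Prop :=
  match s with
  | [::] => A
  | r :: s' => hprodl (hset_mul (hmul H) A (sing r)) s'
  end.
Definition hprod (r : R) (s : seq R) : R -> Prop := hprodl (sing r) s.

(* r^n for n >= 1: hpow r n = r^(n.+1) *)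
Definition hpow (r : R) (n : nat) : R -> Prop := hprod r (nseq n r).

Definition is_unit (x : R) : Prop := exists y, hmul H x y (hone H).

(* hyperideals: nonempty additive subgroup absorbing hypermultiplication,
   which are moreover C-hyperideals (standing convention of the paper). *)
Definition C_condition (I : R -> Prop) : Prop :=
  forall (r : R) (s : seq R),
    (exists x, hprod r s x /\ I x) -> hsubset (hprod r s) I.

Definition hyperideal (I : R -> Prop) : Prop :=
  [/\ exists a, I a,
      (forall a b, I a -> I b -> I (a - b)),
      (forall r a, I a -> hsubset (hmul H r a) I)
    & C_condition I].

Definition proper (I : R -> Prop) : Prop := exists r, ~ I r.
Definition nonzero (I : R -> Prop) : Prop := exists x, I x /\ x <> 0.

Definition hradical (I : R -> Prop) : R -> Prop :=
  fun r => exists n, hsubset (hpow r n) I.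

Definition primary (Q : R -> Prop) : Prop :=
  [/\ hyperideal Q, nonzero Q, proper Q &
      forall x y, hsubset (hmul H x y) Q -> Q x \/ hradical Q y].

Definition one_absorbing_primary (I : R -> Prop) : Prop :=
  [/\ hyperideal I, proper I &
      forall x y z, ~ is_unit x -> ~ is_unit y -> ~ is_unit z ->
        hsubset (hset_mul (hmul H) (hmul H x y) (sing z)) I ->
        hsubset (hmul H x y) I \/ hradical I z].

Definition maximal (M : R -> Prop) : Prop :=
  [/\ hyperideal M, proper M &
      forall J, hyperideal J -> hsubset M J ->
        (forall x, J x <-> M x) \/ (forall x, J x)].

Definition local : Prop :=
  exists M, maximal M /\ forall N, maximal N -> forall x, N x <-> M x.

End Defs.

From mathcomp Require Import all_boot all_algebra.
From Stdlib Require Import Classical.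

(* "primary => 1-absorbing primary" holds in any hyperring: if
   x ∘ y ∘ z ⊆ I and z ∉ √I, primarity applied to each a ∈ x ∘ y and z
   puts a in I.

   For the converse, suppose I is 1-absorbing primary and x ∘ y ⊆ I with
   x ∉ I and y ∉ √I.  Then x and y are nonunits, and the colon hyperideal
   (I : x) = {r | r ∘ x ⊆ I} contains every nonunit a (apply 1-absorption
   to a ∘ x ∘ y ⊆ I) and no unit (since x ∉ I).  A hyperideal whose elements
   are exactly the nonunits is the unique maximal hyperideal, so R would be
   local -- a contradiction. *)

Section MultiplicativeHyperring.
Variables (R : zmodType) (H : hyperring R).

Local Notation "a ** b" := (hmul H a b) (at level 40).
Local Notation "A *** b" := (hset_mul (hmul H) A (sing b)) (at level 40).

Definition absorbing (I : R -> Prop) : Prop :=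
  forall r a, I a -> hsubset (r ** a) I.

Lemma hyperideal_absorbing {I : R -> Prop} : hyperideal H I -> absorbing I.
Proof. by case. Qed.

Lemma absorbing_assoc {I : R -> Prop} {a b c : R} :
  absorbing I -> hsubset (b ** c) I -> hsubset ((a ** b) *** c) I.
Proof.
move=> absI bcI w /hmul_assoc [a' [d [-> [bcd adw]]]].
exact: (absI a d (bcI d bcd)).
Qed.

Lemma unit_cancel {I : R -> Prop} {u v : R} :
  absorbing I -> is_unit H u -> hsubset (u ** v) I -> I v.
Proof.
move=> absI [u' uu'] uvI.
have : ((u' ** u) *** v) v.
  exists (hone H), v; split; first exact/hmul_comm.
  by split; [|apply/hmul_comm; apply: hmul_one].
exact: (absorbing_assoc absI uvI).
Qed.

Lemma unit_hyperideal_full {J : R -> Prop} {u : R} :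
  hyperideal H J -> J u -> is_unit H u -> forall r, J r.
Proof.
move=> /hyperideal_absorbing absJ Ju [u' uu'] r.
have J1 : J (hone H) by apply: (absJ u' u Ju); apply/hmul_comm.
exact: (absJ r _ J1 r (hmul_one H r)).
Qed.

Lemma hone_unit : is_unit H (hone H).
Proof. by exists (hone H); apply: hmul_one. Qed.

Lemma hradical_sub {I : R -> Prop} {y : R} : I y -> hradical H I y.
Proof. by move=> Iy; exists 0%N => w ->. Qed.

Lemma hprodl_rcons (A : R -> Prop) s x :
  hsubset (hprodl H A s *** x) (hprodl H A (rcons s x)).
Proof. by elim: s A => [|c s IH] A //=; exact: IH. Qed.

Definition colon (I : R -> Prop) (x : R) : R -> Prop :=
  fun r => hsubset (r ** x) I.

Lemma colon_hyperideal {I : R -> Prop} (x : R) :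
  hyperideal H I -> hyperideal H (colon I x).
Proof.
move=> HI; case: (HI) => [[i0 Ii0] subI absI CI]; split.
- exists i0 => w /hmul_comm; exact: absI.
- move=> a b xa xb w /hmul_comm /hmul_distr [u [v [xau [/hmul_oppr xbv ->]]]].
  rewrite -[v]GRing.opprK.
  by apply: subI; [apply: xa; apply/hmul_comm | apply: xb; apply/hmul_comm].
- move=> r a xa w raw t wxt.
  by apply: (absorbing_assoc (a:=r) absI xa); exists w, x.
- move=> r s [w [rsw xw]] b rsb t bxt.
  have [t0 wxt0] := hmul_nonempty H w x.
  apply: (CI r (rcons s x)).
  + by exists t0; split; [apply: hprodl_rcons; exists w, x | exact: xw].
  + by apply: hprodl_rcons; exists b, x.
Qed.

Lemma nonunits_hyperideal_local {M : R -> Prop} :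
  hyperideal H M -> (forall a, M a <-> ~ is_unit H a) -> local H.
Proof.
move=> HM Mnu.
have maxM : maximal H M.
  split=> //; first by exists (hone H); move/Mnu; apply; exact: hone_unit.
  move=> J HJ MJ.
  case: (classic (exists u, J u /\ is_unit H u)) => [[u [Ju Uu]]|noU].
  - by right; exact: (unit_hyperideal_full HJ Ju Uu).
  - left=> r; split=> [Jr|]; last exact: MJ.
    by apply/Mnu => Ur; apply: noU; exists r.
exists M; split=> // N [HN [r0 Nr0] maxN] r.
have NM : hsubset N M.
  move=> a Na; apply/Mnu => Ua; apply: Nr0.
  exact: (unit_hyperideal_full HN Na Ua).
case: (maxN M HM NM) => [eqNM | fullM]; first by move: (eqNM r); tauto.
by case: (proj1 (Mnu _) (fullM (hone H))); exact: hone_unit.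
Qed.

Lemma primary_one_absorbing (I : R -> Prop) :
  primary H I -> one_absorbing_primary H I.
Proof.
move=> [HI _ prI primI]; split=> // x y z _ _ _ xyzI.
case: (classic (hradical H I z)) => [rz | nrz]; [by right | left].
move=> a xya; case: (primI a z) => // w azw.
by apply: xyzI; exists a, z.
Qed.

(* A witness of non-primarity of a 1-absorbing primary hyperideal makes
   (I : x) the hyperideal of nonunits, hence R local. *)
Lemma one_absorbing_nonprimary_local {I : R -> Prop} {x y : R} :
  one_absorbing_primary H I -> hsubset (x ** y) I ->
  ~ I x -> ~ hradical H I y -> local H.
Proof.
move=> [HI _ absorb1] xyI nIx nry.
have absI := hyperideal_absorbing HI.
have nux : ~ is_unit H x.
  by move=> Ux; apply/nry/hradical_sub; exact: (unit_cancel absI Ux xyI).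
have nuy : ~ is_unit H y.
  move=> Uy; apply: nIx; apply: (unit_cancel absI Uy) => w yxw.
  by apply: xyI; apply/hmul_comm.
apply: (nonunits_hyperideal_local (colon_hyperideal x HI)) => a; split.
- by move=> axI Ua; apply: nIx; exact: (unit_cancel absI Ua axI).
- move=> nua.
  have [//|] := absorb1 a x y nua nux nuy (absorbing_assoc absI xyI).
  by move/nry.
Qed.

Lemma one_absorbing_primary_primary (I : R -> Prop) :
  ~ local H -> nonzero I -> one_absorbing_primary H I -> primary H I.
Proof.
move=> nonlocal nzI I1; have [HI prI _] := I1; split=> // x y xyI.
apply: NNPP => notxy; apply: nonlocal.
by apply: (one_absorbing_nonprimary_local I1 xyI) => h; apply: notxy; [left | right].
Qed.

End MultiplicativeHyperring.

Theorem mainTheorem7 (R : zmodType) (H : hyperring R) (I : R -> Prop) :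
  ~ local H -> hyperideal H I -> nonzero I ->
  (one_absorbing_primary H I <-> primary H I).
Proof.
move=> nonlocal _ nzI; split.
- exact: one_absorbing_primary_primary.
- exact: primary_one_absorbing.
Qed.
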